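(* For every integer $b\ge0$, the number $jp_b(1)$ of multiplex juggling patterns with exactly $b$ balls and minimal period $1$ equals $p(b)$, the number of (unordered) partitions of $b$.
   Context: A multiplex siteswap of length $n$ is a sequence $(M_0,\ldots,M_{n-1})$, indexed by $t\in\mathbb{Z}/n\mathbb{Z}$, of finite multisets of positive integers (empty means no throw) such that for every $t$, $|M_t|$ equals the number of pairs $(s,h)$ with $h$ an element of $M_s$ (with multiplicity) and $s+h\equiv t\pmod n$; its number of balls is $\frac1n\sum_t\sum_{h\in M_t}h$. Its minimal period is the least $d\ge1$ with $M_{t+d}=M_t$ for all $t$. A multiplex juggling pattern with $b$ balls and minimal period $n$ is an orbit, under cyclic rotation, of multiplex siteswaps of length $n$ with $b$ balls and minimal period $n$. $p(0)=1$. *)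

From mathcomp Require Import all_boot.
Set Implicit Arguments. Unset Strict Implicit. Unset Printing Implicit Defensive.

(* A finite multiset of positive integers is represented canonically as a
   nondecreasing (sorted by leq) list of positive naturals; so two such
   lists are equal iff the multisets are equal. *)
Definition mset_ok (m : seq nat) : bool := sorted leq m && all (fun h => 0 < h) m.

Definition MS (s : seq (seq nat)) (t : nat) : seq nat := nth [::] s t.

Definition is_siteswap (n : nat) (s : seq (seq nat)) : Prop :=
  [/\ size s = n, all mset_ok s &
      forall t, t < n ->
        size (MS s t) = \sum_(u < n) count (fun h => (u + h) %% n == t) (MS s u)].

(* number of balls = (1/n) * sum of all throws, i.e. sum = b * n *)
Definition has_balls (n : nat) (s : seq (seq nat)) (b : nat) : Prop :=
  \sum_(t < n) sumn (MS s t) = b * n.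

Definition is_period (n : nat) (s : seq (seq nat)) (d : nat) : Prop :=
  forall t, t < n -> MS s ((t + d) %% n) = MS s t.

Definition minimal_period (n : nat) (s : seq (seq nat)) (d : nat) : Prop :=
  [/\ 0 < d, is_period n s d & forall d', 0 < d' < d -> ~ is_period n s d'].

Definition pattern_rep (b n : nat) (s : seq (seq nat)) : Prop :=
  [/\ is_siteswap n s, has_balls n s b & minimal_period n s n].

Definition rot_equiv (s1 s2 : seq (seq nat)) : Prop := exists k, s2 = rot k s1.

(* num_patterns b n k : the number of multiplex juggling patterns (rotation
   orbits of siteswaps with b balls and minimal period n) is exactly k,
   witnessed by a complete system of k pairwise inequivalent representatives. *)
Definition num_patterns (b n k : nat) : Prop :=
  exists reps : seq (seq (seq nat)),
    [/\ size reps = k,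
        forall r, r \in reps -> pattern_rep b n r,
        forall s, pattern_rep b n s -> exists2 r, r \in reps & rot_equiv r s
      & forall i j, i < j < k -> ~ rot_equiv (nth [::] reps i) (nth [::] reps j)].

(* p(b): number of partitions of b, each partition encoded by its
   multiplicity function (f i = number of parts equal to i+1). *)
Definition npart (b : nat) : nat :=
  #|[set f : {ffun 'I_b -> 'I_b.+1} | \sum_(i < b) i.+1 * f i == b]|.

(** A siteswap of length 1 is a single multiset [M_0]; the siteswap condition
    [|M_0| = #{h in M_0 | 0 + h = 0 mod 1}] holds for every multiset, a period-1
    pattern is never rotated to another one, and it has [b] balls exactly when
    the throws in [M_0] add up to [b]. Hence period-1 patterns with [b] balls are
    the partitions of [b], and a partition is determined by the multiplicities
    of its parts. *)

From mathcomp Require Import all_boot.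

Set Implicit Arguments.
Unset Strict Implicit.
Unset Printing Implicit Defensive.

Section MultiplicityParts.

Variable b : nat.
Implicit Types f : {ffun 'I_b -> 'I_b.+1}.

Definition mult_parts f : seq nat :=
  sort leq (flatten [seq nseq (f i) i.+1 | i <- enum 'I_b]).

Lemma mem_mult_parts f x : x \in mult_parts f -> 0 < x <= b.
Proof.
by rewrite mem_sort => /flatten_mapP[i _]; rewrite mem_nseq => /andP[_ /eqP->] /=.
Qed.

Lemma count_mult_parts f (i : 'I_b) : count_mem i.+1 (mult_parts f) = f i.
Proof.
rewrite count_sort count_flatten -map_comp sumnE big_map big_enum /=.
rewrite (bigD1 i) //= count_nseq /= eqxx mul1n big1 ?addn0 // => j ji.
by rewrite count_nseq /= eqSS (inj_eq val_inj) (negbTE ji).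
Qed.

Lemma sumn_mult_parts f : sumn (mult_parts f) = \sum_(i < b) i.+1 * f i.
Proof.
rewrite (perm_sumn (permEl (perm_sort _ _))) sumn_flatten -map_comp.
rewrite sumnE big_map big_enum; apply: eq_bigr => i _ /=.
by rewrite sumnE big_nseq iter_addn_0 mulnC.
Qed.

Lemma mset_ok_mult_parts f : mset_ok (mult_parts f).
Proof.
rewrite /mset_ok sort_sorted /=; last exact: leq_total.
by apply/allP => x /mem_mult_parts /andP[].
Qed.

Lemma mult_parts_inj : injective mult_parts.
Proof.
move=> f g fg; apply/ffunP => i; apply: val_inj.
by rewrite /= -!count_mult_parts fg.
Qed.

End MultiplicityParts.

Lemma mem_leq_sumn (m : seq nat) x : x \in m -> x <= sumn m.
Proof. by move/perm_to_rem/perm_sumn => /= ->; apply: leq_addr. Qed.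

Lemma size_leq_sumn (m : seq nat) : all (fun h => 0 < h) m -> size m <= sumn m.
Proof.
move=> /allP m_pos; rewrite -sum1_size sumnE big_seq [X in _ <= X]big_seq.
by apply: leq_sum => x /m_pos.
Qed.

Lemma mult_parts_surj (m : seq nat) : mset_ok m ->
  exists f : {ffun 'I_(sumn m) -> 'I_(sumn m).+1}, mult_parts f = m.
Proof.
case/andP=> m_sorted /allP m_pos.
have count_lt (i : 'I_(sumn m)) : count_mem i.+1 m < (sumn m).+1.
  by rewrite ltnS (leq_trans (count_size _ _)) ?size_leq_sumn //; apply/allP.
set f := [ffun i => Ordinal (count_lt i)]; exists f.
apply: (sorted_eq leq_trans anti_leq) => //; first by case/andP: (mset_ok_mult_parts f).
apply/allP => x _; apply/eqP.
have [/andP[x_gt0 x_le] | x_out] := boolP (0 < x <= sumn m).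
  by case: x x_gt0 x_le => // x _ x_lt; rewrite (count_mult_parts f (Ordinal x_lt)) ffunE.
rewrite !(count_memPn _) //; apply: contra x_out; last exact: mem_mult_parts.
by move=> x_m; rewrite m_pos ?mem_leq_sumn.
Qed.

Lemma pattern_rep_period1 b s :
  pattern_rep b 1 s <-> exists2 m, s = [:: m] & mset_ok m && (sumn m == b).
Proof.
rewrite /pattern_rep /is_siteswap /has_balls /minimal_period /is_period.
split.
  case=> -[size_s s_ok _]; rewrite big_ord1 muln1 => sum_s _.
  case: s size_s s_ok sum_s => [|m [|]] //= _; rewrite andbT => m_ok <-.
  by exists m; rewrite ?m_ok ?eqxx.
case=> m -> /andP[m_ok /eqP <-]; rewrite /= m_ok big_ord1 muln1.
split=> //; last by split=> // -[|t] // -[|d].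
split=> // -[|t] // _; rewrite big_ord1 /=.
by rewrite -count_predT; apply: eq_count => h; rewrite modn1.
Qed.

Lemma rot_equiv1 (x y : seq nat) : rot_equiv [:: x] [:: y] -> x = y.
Proof. by case=> -[|k] [->]. Qed.

Lemma num_patterns_period1 b (parts : seq (seq nat)) : uniq parts ->
  (forall m, (m \in parts) = mset_ok m && (sumn m == b)) ->
  num_patterns b 1 (size parts).
Proof.
move=> parts_uniq mem_parts.
exists [seq [:: m] | m <- parts]; split.
- by rewrite size_map.
- by move=> _ /mapP[m m_parts ->]; apply/pattern_rep_period1; exists m; rewrite -?mem_parts.
- move=> _ /pattern_rep_period1[m -> m_part].
  by exists [:: m]; [apply: map_f; rewrite mem_parts | exists 0].
- move=> i j /andP[lt_ij lt_jk]; have lt_ik := ltn_trans lt_ij lt_jk.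
  rewrite !(nth_map [::]) // => /rot_equiv1 /eqP.
  by rewrite nth_uniq // => /eqP eq_ij; rewrite eq_ij ltnn in lt_ij.
Qed.

Theorem theorem9 (b : nat) : num_patterns b 1 (npart b).
Proof.
set S := [set f : {ffun 'I_b -> 'I_b.+1} | \sum_(i < b) i.+1 * f i == b].
rewrite /npart -/S cardE -(size_map (@mult_parts b)).
apply: num_patterns_period1.
  by rewrite (map_inj_uniq (@mult_parts_inj b)) enum_uniq.
move=> m; apply/mapP/idP.
  by case=> f; rewrite mem_enum inE -sumn_mult_parts => f_sum ->; rewrite mset_ok_mult_parts.
case/andP=> m_ok /eqP m_sum; subst b.
have [f f_m] := mult_parts_surj m_ok.
by exists f; rewrite // mem_enum inE -sumn_mult_parts f_m.
Qed.
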